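(* Let $\Sigma$ be a two-letter alphabet and let $w\in\Sigma^*$ be a binary word. If every element of $\mathtt{BR}(w)$ is rich, then $2\le l(w)\le 8$.
   Context: For a word $w=w_1\cdots w_n$, $|w|=n$, $w^R=w_n\cdots w_1$; $w$ is a palindrome if $w=w^R$; a factor of $w$ is a word $u$ with $w=puq$. A word $w$ is rich if the number of distinct nonempty palindromic factors of $w$ equals $|w|$. The block reversal of a nonempty word $w$ is $\mathtt{BR}(w)=\{B_tB_{t-1}\cdots B_1 : w=B_1\cdots B_t,\ t\ge1,\ \text{each } B_i \text{ nonempty}\}$. Every nonempty word has a unique run-length encoding $w=c_1^{n_1}c_2^{n_2}\cdots c_k^{n_k}$ with letters $c_i\neq c_{i+1}$ and $n_i\ge1$; $(n_1,\dots,n_k)$ is the run sequence and $l(w)=k$ is its length. A binary word is a word in which exactly two distinct letters occur. *)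

From mathcomp Require Import all_boot.
Set Implicit Arguments. Unset Strict Implicit. Unset Printing Implicit Defensive.

Section Words.
Variable T : eqType.

Definition palindrome (w : seq T) : bool := w == rev w.

Definition nonempty_factors (w : seq T) : seq (seq T) :=
  [seq take j (drop i w) | i <- iota 0 (size w), j <- iota 1 (size w - i)].

Definition num_pal_factors (w : seq T) : nat :=
  size (undup [seq u <- nonempty_factors w | palindrome u]).

Definition rich (w : seq T) : bool := num_pal_factors w == size w.

Definition in_BR (w u : seq T) : Prop :=
  exists bs : seq (seq T),
    [/\ bs != [::], all (fun b => b != [::]) bs, flatten bs = w
      & u = flatten (rev bs)].

Fixpoint rle (w : seq T) : seq (T * nat) :=
  match w with
  | [::] => [::]
  | a :: w' =>
      match rle w' with
      | (b, n) :: r => if a == b then (b, n.+1) :: r else (a, 1) :: (b, n) :: r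
      | [::] => [:: (a, 1)]
      end
  end.

Definition run_len (w : seq T) : nat := size (rle w).

Definition binary_word (w : seq T) : bool := size (undup w) == 2.

End Words.

Example rle_ex : rle [:: 0; 0; 1; 0]%N = [:: (0,2); (1,1); (0,1)]%N. Proof. by []. Qed.
Example rich_ex : rich [:: 0; 1; 0; 0]%N. Proof. by []. Qed.
Example notrich_ex : ~~ rich [:: 0; 0; 1; 1; 0; 1; 0; 0]%N. Proof. by []. Qed.

From mathcomp Require Import all_boot zify.
Set Implicit Arguments. Unset Strict Implicit. Unset Printing Implicit Defensive.

(** Over a two-letter alphabet, a word with at least nine runs starts with
    a^n0 b^n1 a^n2 ... b^n7 a^n8.  Cutting it into the blocks
    a^n0 b^n1 | a^n2 | b^n3 a^(n4-1) | a b^n5 | a^n6 b | b^(n7-1) a^n8 | rest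
    and reversing their order produces a word containing aaba b^m aa with
    m >= 2.  That word is not rich: its last letter creates no new palindrome,
    since its only palindromic suffixes are a and aa.  Richness passes to
    factors, because appending a letter creates at most one new palindromic
    factor (the longest palindromic suffix) and reversal preserves the number
    of palindromic factors.  The lower bound holds because a single run uses
    only one letter. *)

Section SeqFacts.
Variable T : eqType.
Implicit Types s t : seq T.

Lemma cat_nseq_cons n (c : T) s : nseq n c ++ c :: s = c :: nseq n c ++ s.
Proof. by elim: n => //= n ->. Qed.

Lemma size_undup_subset s t : {subset s <= t} -> size (undup s) <= size (undup t).
Proof.
move=> sub_st; apply: uniq_leq_size; first exact: undup_uniq.
by move=> x; rewrite !mem_undup; apply: sub_st.
Qed.

Lemma size_undup_cat s t : size (undup (s ++ t)) <= size (undup s) + size (undup t).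
Proof. by rewrite undup_cat size_cat leq_add2r size_filter count_size. Qed.

Lemma size_undup_const s : {in s &, forall x y, x = y} -> size (undup s) <= 1.
Proof.
case: s => [|x s] // const_s; apply: (@size_undup_subset _ [:: x]) => y ys.
by rewrite inE (const_s y x) ?mem_head.
Qed.

Lemma size_undup_notin s t :
  size (undup s) <= size (undup t) + size (undup [seq x <- s | x \notin t]).
Proof.
rewrite addnC; apply: leq_trans (size_undup_cat _ t).
apply: size_undup_subset => x xs; rewrite mem_cat mem_filter xs andbT.
exact: orNb.
Qed.

End SeqFacts.

Section PalindromicFactors.
Variable T : eqType.
Implicit Types (a b c : T) (s t u v w x y : seq T).

Definition pal_factors w := [seq u <- nonempty_factors w | palindrome u].

Lemma mem_nonempty_factors w v :
  (v \in nonempty_factors w) = (v != [::]) && infix v w.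
Proof.
apply/allpairsPdep/andP => [[i [j []]]|[v_nil /infixP [s [s' ->]]]].
  rewrite !mem_iota !add0n => /andP [_ lt_i] /andP [lt0j _] ->.
  split; last exact: infix_trans (infix_take _ _) (infix_drop _ _).
  by rewrite -size_eq0 -lt0n size_take size_drop; case: ifP; lia.
exists (size s), (size v); rewrite drop_size_cat // take_size_cat //.
rewrite !mem_iota !size_cat; move: v_nil; rewrite -size_eq0 -lt0n => v_pos.
by split=> //; apply/andP; split; lia.
Qed.

Lemma mem_pal_factors w v :
  (v \in pal_factors w) = [&& v != [::], infix v w & palindrome v].
Proof. by rewrite mem_filter mem_nonempty_factors andbC andbA. Qed.

(* Both being palindromes, v1 is a proper prefix of v2, hence ends before the
   last letter. *)
Lemma pal_suffix_infix x c v1 v2 :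
    palindrome v1 -> palindrome v2 ->
    suffix v1 (rcons x c) -> suffix v2 (rcons x c) -> size v1 < size v2 ->
  infix v1 x.
Proof.
move=> /eqP pal1 /eqP pal2 suf1 suf2 lt12.
have /prefixP [t def_v2] : prefix v1 v2.
  move: suf1 suf2; rewrite -prefix_rev -pal1 -prefix_rev -pal2 !prefixE.
  by move=> /eqP def1 /eqP def2; rewrite -def2 take_takel ?def1 // ltnW.
case/lastP: t def_v2 lt12 suf2 => [-> |t d ->]; first by rewrite cats0 ltnn.
by rewrite -rcons_cat suffix_rcons => _ /andP [_ /suffixW /catr_infix].
Qed.

Lemma new_pal_factor_rcons x c v :
    v \in pal_factors (rcons x c) -> v \notin pal_factors x ->
  [/\ palindrome v, suffix v (rcons x c) & ~~ infix v x].
Proof.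
rewrite !mem_pal_factors => /and3P [-> inf ->]; rewrite andbT /= => not_inf.
by move: inf; rewrite infix_rconsl (negbTE not_inf) orbF.
Qed.

Lemma num_pal_factors_rcons x c :
  num_pal_factors (rcons x c) <= (num_pal_factors x).+1.
Proof.
rewrite -addn1; apply: leq_trans (size_undup_notin _ (pal_factors x)) _.
rewrite leq_add2l; apply: size_undup_const => v1 v2.
rewrite 2!mem_filter => /andP [out1 /new_pal_factor_rcons] /(_ out1) [pal1 suf1 ninf1].
move=> /andP [out2 /new_pal_factor_rcons] /(_ out2) [pal2 suf2 ninf2].
case: (ltngtP (size v1) (size v2)) => [lt12|lt21|eq12].
- by rewrite (pal_suffix_infix pal1 pal2 suf1 suf2 lt12) in ninf1.
- by rewrite (pal_suffix_infix pal2 pal1 suf2 suf1 lt21) in ninf2.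
- by move: suf1 suf2; rewrite !suffixE eq12 => /eqP <- /eqP.
Qed.

Lemma num_pal_factors_rcons_old x c :
    (forall v, palindrome v -> suffix v (rcons x c) -> infix v x) ->
  num_pal_factors (rcons x c) <= num_pal_factors x.
Proof.
move=> old; apply: size_undup_subset => v; rewrite !mem_pal_factors.
by case/and3P=> -> + pal; rewrite pal infix_rconsl andbT => /orP [/old->|].
Qed.

Lemma num_pal_factors_cat x y :
  num_pal_factors (x ++ y) <= num_pal_factors x + size y.
Proof.
elim/last_ind: y => [|y c IHy]; first by rewrite cats0 addn0.
rewrite -rcons_cat size_rcons addnS.
by apply: leq_trans (num_pal_factors_rcons _ _) _; rewrite ltnS.
Qed.

Lemma num_pal_factors_le_size w : num_pal_factors w <= size w.
Proof. exact: num_pal_factors_cat [::] w. Qed.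

Lemma num_pal_factors_rev w : num_pal_factors (rev w) = num_pal_factors w.
Proof.
rewrite /num_pal_factors -/(pal_factors _) -/(pal_factors _).
rewrite -(size_map (@rev T)) -undup_map_inj; last exact: can_inj (@revK T).
apply: perm_size; apply: uniq_perm; rewrite ?undup_uniq // => v.
rewrite !mem_undup -[v]revK (mem_map (can_inj (@revK T))) !mem_pal_factors.
by rewrite revK infix_rev -!size_eq0 size_rev /palindrome revK (eq_sym (rev v)).
Qed.

Lemma num_pal_factors_cat3 s u s' :
  num_pal_factors (s ++ u ++ s') <= size s + num_pal_factors u + size s'.
Proof.
rewrite catA; apply: leq_trans (num_pal_factors_cat _ _) _; rewrite leq_add2r.
rewrite -num_pal_factors_rev rev_cat; apply: leq_trans (num_pal_factors_cat _ _) _.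
by rewrite num_pal_factors_rev size_rev addnC.
Qed.

Lemma rich_infix u w : infix u w -> rich w -> rich u.
Proof.
case/infixP=> [s [s' ->]] /eqP rich_w; have := num_pal_factors_cat3 s u s'.
rewrite /rich eqn_leq num_pal_factors_le_size rich_w !size_cat /=; lia.
Qed.

Lemma suffix_cons_inv v c s : suffix v (c :: s) -> v = c :: s \/ suffix v s.
Proof.
case/suffixP=> [[|d t] /= def_cs]; first by left.
by right; case: def_cs => _ ->; apply: suffix_suffix.
Qed.

Lemma palindrome_ends s1 s s2 v :
  palindrome v -> v = s1 ++ s ++ s2 -> size s1 = size s2 -> s1 = rev s2.
Proof.
move=> /eqP + def_v eq_size; rewrite def_v => /(congr1 (take (size s1))).
by rewrite take_size_cat // !rev_cat -catA take_size_cat // size_rev.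
Qed.

Lemma pal_suffix_nseq a b q v :
  a != b -> palindrome v -> suffix v (nseq q b ++ [:: a; a]) -> prefix v [:: a; a].
Proof.
move=> ab pal; elim: q => [|q IHq] suf_v.
  case/suffix_cons_inv: suf_v => [->|/suffix_cons_inv [->|]]; first exact: prefix_refl.
    exact: prefix_prefix.
  by rewrite suffixs0 => /eqP ->.
case/suffix_cons_inv: suf_v => [def_v|]; last exact: IHq.
have {}def_v : v = [:: b] ++ (nseq q b ++ [:: a]) ++ [:: a] by rewrite def_v -catA.
by case: (palindrome_ends pal def_v erefl) => /eqP; rewrite eq_sym (negbTE ab).
Qed.

Lemma not_rich_aaba_bb_aa a b m :
  a != b -> ~~ rich ([:: a; a; b; a] ++ nseq m.+2 b ++ [:: a; a]).
Proof.
move=> ab; have ba : b != a by rewrite eq_sym.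
set x := [:: a; a; b; a] ++ nseq m.+2 b ++ [:: a].
have -> : [:: a; a; b; a] ++ nseq m.+2 b ++ [:: a; a] = rcons x a.
  by rewrite -cats1 -!catA.
have : num_pal_factors (rcons x a) <= size x.
  apply: leq_trans (num_pal_factors_le_size x).
  apply: num_pal_factors_rcons_old => v pal; rewrite /x -cats1 -!catA /=.
  have ends s1 s s2 := @palindrome_ends s1 s s2 v pal.
  case/suffix_cons_inv=> [|].
    have -> : b :: b :: nseq m b ++ [:: a; a] = nseq m b ++ [:: b; b; a; a].
      by rewrite !cat_nseq_cons.
    by move=> /(ends [:: a; a; b; a]) /(_ erefl) [] /eqP; rewrite (negbTE ab).
  case/suffix_cons_inv=> [/(ends [:: a; b] (a :: nseq m.+2 b)) /(_ erefl) [] /eqP|].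
    by rewrite (negbTE ba).
  case/suffix_cons_inv=> [/(ends [:: b; a] (nseq m.+2 b)) /(_ erefl) [] /eqP|].
    by rewrite (negbTE ba).
  case/suffix_cons_inv=> [/(ends [:: a; b] (nseq m.+1 b)) /(_ erefl) [] /eqP|].
    by rewrite (negbTE ba).
  move/(@pal_suffix_nseq a b m.+2 v ab pal)/prefix_trans.
  by move/(_ _ (prefix_prefix _ (b :: a :: nseq m.+2 b ++ [:: a])))/prefixW.
by rewrite /rich size_rcons => le_x; apply: contraTneq le_x => ->; rewrite ltnn.
Qed.

End PalindromicFactors.

Section Runs.
Variable T : eqType.
Implicit Types (a b c : T) (s w : seq T).

Lemma in_BR_flatten_rev (bs : seq (seq T)) :
  flatten bs != [::] -> in_BR (flatten bs) (flatten (rev bs)).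
Proof.
move=> bs_nil; set nonempty := fun s : seq T => s != [::].
have flatten_nonempty cs : flatten (filter nonempty cs) = flatten cs.
  by elim: cs => //= -[|c s] cs /= ->.
exists (filter nonempty bs); split; [|exact: filter_all|exact: flatten_nonempty|].
  by apply: contraNneq bs_nil => nil_bs; rewrite -flatten_nonempty nil_bs.
by rewrite -filter_rev flatten_nonempty.
Qed.

(* [alt_runs a b [:: n0; n1; n2; ...]] is a^(n0+1) b^(n1+1) a^(n2+1) ...:
   lengths are stored minus one so that every run is nonempty. *)
Fixpoint alt_runs a b (ns : seq nat) : seq T :=
  if ns is n :: ns' then nseq n.+1 a ++ alt_runs b a ns' else [::].

Lemma alt_runs_binary_size a b ns : binary_word (alt_runs a b ns) -> 1 < size ns.
Proof.
case: ns => [|n [|m ns]] //=; rewrite /binary_word cats0 => /eqP undup_a.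
have := @size_undup_const _ (nseq n.+1 a); rewrite undup_a; apply.
by move=> x y /nseqP [-> _] /nseqP [-> _].
Qed.

Lemma nine_runs_BR_not_rich a b ns :
  a != b -> 8 < size ns -> exists2 u, in_BR (alt_runs a b ns) u & ~~ rich u.
Proof.
move=> ab; case: ns => [|n0 [|n1 [|n2 [|n3 [|n4 [|n5 [|n6 [|n7 [|n8 ns]]]]]]]]] // _.
set blocks := [:: nseq n0.+1 a ++ nseq n1.+1 b; nseq n2.+1 a;
  nseq n3.+1 b ++ nseq n4 a; a :: nseq n5.+1 b; nseq n6.+1 a ++ [:: b];
  nseq n7 b ++ nseq n8.+1 a; alt_runs b a ns].
exists (flatten (rev blocks)).
  have -> : alt_runs a b [:: n0, n1, n2, n3, n4, n5, n6, n7, n8 & ns] = flatten blocks.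
    by rewrite /= -!catA /= cat_nseq_cons cats0.
  exact: in_BR_flatten_rev.
apply: contra (not_rich_aaba_bb_aa (n5 + n3) ab); apply: rich_infix; apply/infixP.
exists (alt_runs b a ns ++ nseq n7 b ++ nseq (n8 + n6) a).
exists (nseq (n4 + n2 + n0) a ++ nseq n1.+1 b).
by rewrite /blocks /rev /= !nseqD -!catA /= !cat_nseq_cons cats0.
Qed.

Definition unrle (r : seq (T * nat)) : seq T := flatten [seq nseq p.2 p.1 | p <- r].

Lemma rleK : cancel (@rle T) unrle.
Proof.
rewrite /unrle => w; elim: w => //= c w; case: (rle w) => [|[d n] r] <- //=.
by case: (c =P d) => [->|].
Qed.

Lemma rle_gt0 w : all (fun p => 0 < p.2) (rle w).
Proof.
elim: w => //= c w; case: (rle w) => [|[d n] r] //=.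
by case: ifP => _ //= /andP [_ ->].
Qed.

Lemma rle_sorted w : sorted (fun p q => p.1 != q.1) (rle w).
Proof.
elim: w => //= c w; case: (rle w) => [|[d n] r] //=.
by case: ifP => [_|/negbT cd] /=; [case: r | rewrite cd].
Qed.

End Runs.

Section TwoLetters.
Variables (Sigma : finType) (card_Sigma : #|Sigma| = 2).
Implicit Types (a b c : Sigma) (w : seq Sigma).

Lemma card2_eq a b c : b != a -> c != a -> c = b.
Proof.
have [d C1a] : {d | predC1 a =i pred1 d} by apply: mem_card1; rewrite cardC1 card_Sigma.
by move=> ba ca; move: (C1a b) (C1a c); rewrite !inE ba ca => /esym/eqP-> /esym/eqP.
Qed.

Lemma card2_neq a : exists b, a != b.
Proof.
have /card_gt0P [b] : 0 < #|predC1 a| by rewrite cardC1 card_Sigma.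
by rewrite inE eq_sym; exists b.
Qed.

Lemma unrle_alt_runs a b n r :
    a != b -> all (fun p => 0 < p.2) r ->
    sorted (fun p q => p.1 != q.1) ((a, n.+1) :: r) ->
  unrle ((a, n.+1) :: r) = alt_runs a b (n :: [seq p.2.-1 | p <- r]).
Proof.
elim: r a b n => [|[c [|m]] r IHr] a b n ab //= pos /andP [ac sorted_r].
have def_c : c = b by apply: (@card2_eq a); rewrite eq_sym.
rewrite def_c in sorted_r *; rewrite eq_sym in ab.
by have /= <- := IHr b a m ab pos sorted_r.
Qed.

Lemma alt_runs_decomposition w :
  exists a b ns, [/\ a != b, size ns = run_len w & w = alt_runs a b ns].
Proof.
rewrite /run_len -{-1}[w]rleK; have := rle_gt0 w; have := rle_sorted w.
case: (rle w) => [|[a [|n]] r] // => [_ _|sorted_r /andP [_ pos]].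
  have /card_gt0P [a _] : 0 < #|Sigma| by rewrite card_Sigma.
  by have [b ab] := card2_neq a; exists a, b, [::].
have [b ab] := card2_neq a; exists a, b, (n :: [seq p.2.-1 | p <- r]).
by rewrite /= size_map (unrle_alt_runs ab).
Qed.

End TwoLetters.

Unset Implicit Arguments.

Theorem mainTheorem2 (Sigma : finType) (hS : #|Sigma| = 2) (w : seq Sigma) :
  binary_word w ->
  (forall u, in_BR w u -> rich u) ->
  2 <= run_len w <= 8.
Proof.
have [a [b [ns [ab <- ->]]]] := alt_runs_decomposition hS w.
move=> /alt_runs_binary_size -> rich_BR /=; rewrite leqNgt; apply/negP.
by case/(nine_runs_BR_not_rich ab) => u /rich_BR ->.
Qed.
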